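(* For each finite set $\tau\subseteq\mathbb{S}$ of source labels, the set of graphs $\mathcal{G}^\tau_{\mathrm{gen}}$ is context-free.
   Context: Fix a countably infinite set $\mathbb{S}$ of source labels and a set $\mathbb{A}$ of edge labels with arities $\ge1$. Graphs of sort $\tau$ are isomorphism classes of finite $\mathbb{A}$-labelled hypergraphs with an injective map from $\tau$ into the vertices (sources). HR operations: constants $\mathbf{0}_\tau$ (sources only) and $\mathbf{a}_{(s_1,\ldots,s_{\#a})}$ (single $a$-edge on the $s_i$-sources); unary $\mathsf{restrict}_\tau$ (forget source labels outside $\tau$), $\mathsf{rename}_\alpha$ ($\alpha$ a finite permutation of $\mathbb{S}$, relabelling sources), binary $\parallel$ (disjoint union fusing equally labelled sources). $\mathcal{G}^\tau_{\mathrm{gen}}$ is the set of values of ground terms using only $\mathbf{0}_{\tau'}$ ($\tau'\subseteq\tau$), $\mathbf{a}_{(s_1,\ldots)}$ ($s_i\in\tau$), $\mathsf{restrict}_{\tau'}$ ($\tau'\subseteq\tau$), $\mathsf{rename}_\alpha$ ($\alpha$ fixing all elements outside $\tau$) and $\parallel$. A grammar is a finite set of rules $U\to t$ with $U$ a nonterminal and $t$ a term over HR operations whose variables are nonterminals; a set of graphs is context-free if it is the component of some nonterminal in the least solution of a grammar (terms evaluated on sets by lifting). *)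

From Stdlib Require Lists.List.
From mathcomp Require Import all_boot.
Set Implicit Arguments. Unset Strict Implicit. Unset Printing Implicit Defensive.

(* Source labels S := nat (countably infinite).  Finite sets of source labels
   (sorts) are represented by sequences, only membership matters.
   Edge labels: a finite type A with arity ar : A -> nat. *)

Section HR.
Variables (A : finType) (ar : A -> nat).

(* Concrete hypergraphs: a (duplicate-free) list of vertices (natural numbers),
   a list (multiset) of labelled hyperedges (label, attachment sequence), and a
   list of sources (source label, vertex), injective in both components.
   Graphs in the paper's sense are isomorphism classes of these. *)
Record graph := Graph {
  gverts : seq nat;
  gedges : seq (A * seq nat);
  gsrc   : seq (nat * nat) }.

Definition iso (g h : graph) : Prop :=
  exists f : nat -> nat,
    {in gverts g &, injective f} /\
    perm_eq (map f (gverts g)) (gverts h) /\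
    perm_eq [seq (e.1, map f e.2) | e <- gedges g] (gedges h) /\
    perm_eq [seq (p.1, f p.2) | p <- gsrc g] (gsrc h).

Record fperm := FPerm {
  fperm_fun :> nat -> nat;
  fperm_bij : bijective fperm_fun;
  fperm_fin : exists n0, forall n, n0 <= n -> fperm_fun n = n }.

Definition hr_zero (tau : seq nat) : graph :=
  Graph (undup tau) [::] [seq (s, s) | s <- undup tau].

Definition hr_edge (a : A) (ss : seq nat) : graph :=
  Graph (undup ss) [:: (a, ss)] [seq (s, s) | s <- undup ss].

Definition hr_restrict (tau : seq nat) (g : graph) : graph :=
  Graph (gverts g) (gedges g) [seq p <- gsrc g | p.1 \in tau].

Definition hr_rename (alpha : fperm) (g : graph) : graph :=
  Graph (gverts g) (gedges g) [seq (alpha p.1, p.2) | p <- gsrc g].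

Definition src_vert (g : graph) (s : nat) : option nat :=
  ohead [seq p.2 | p <- gsrc g & p.1 == s].
Definition vert_lab (g : graph) (v : nat) : option nat :=
  ohead [seq p.1 | p <- gsrc g & p.2 == v].

(* parallel composition: disjoint union fusing equally labelled sources;
   the vertices of h are shifted beyond those of g, except the h-sources
   whose label is also a source label of g, which are sent to that source *)
Definition par_map (g h : graph) (v : nat) : nat :=
  let off := (foldr maxn 0 (gverts g)).+1 in
  match vert_lab h v with
  | Some s => match src_vert g s with Some u => u | None => v + off end
  | None => v + off
  end.

Definition hr_par (g h : graph) : graph :=
  let m := par_map g h in
  Graph (gverts g ++ [seq m v | v <- gverts h & m v \notin gverts g])
        (gedges g ++ [seq (e.1, map m e.2) | e <- gedges h])
        (gsrc g ++ [seq (p.1, m p.2) | p <- gsrc h & p.1 \notin unzip1 (gsrc g)]).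

Inductive term (N : Type) : Type :=
| TVar of N
| TZero of seq nat
| TEdge (a : A) of (ar a).-tuple nat
| TRestrict of seq nat & term N
| TRename of fperm & term N
| TPar of term N & term N.

Fixpoint value (t : term void) : graph :=
  match t with
  | TVar x => match x with end
  | TZero tau => hr_zero tau
  | TEdge a ss => hr_edge a ss
  | TRestrict tau t => hr_restrict tau (value t)
  | TRename al t => hr_rename al (value t)
  | TPar t1 t2 => hr_par (value t1) (value t2)
  end.

Fixpoint eval_set (N : Type) (sigma : N -> graph -> Prop) (t : term N)
  : graph -> Prop :=
  match t with
  | TVar x => sigma x
  | TZero tau => fun g => g = hr_zero tau
  | TEdge a ss => fun g => g = hr_edge a ss
  | TRestrict tau t => fun g => exists g', eval_set sigma t g' /\ g = hr_restrict tau g'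
  | TRename al t => fun g => exists g', eval_set sigma t g' /\ g = hr_rename al g'
  | TPar t1 t2 => fun g => exists g1 g2,
      eval_set sigma t1 g1 /\ eval_set sigma t2 g2 /\ g = hr_par g1 g2
  end.

Definition grammar (N : Type) := seq (N * term N).

Definition least_sol (N : Type) (R : grammar N) (U : N) (g : graph) : Prop :=
  forall sigma : N -> graph -> Prop,
    (forall r, Stdlib.Lists.List.In r R -> forall g', eval_set sigma r.2 g' -> sigma r.1 g') ->
    sigma U g.

(* two sets of concrete graphs denote the same set of isomorphism classes *)
Definition same_classes (L1 L2 : graph -> Prop) : Prop :=
  (forall g, L1 g -> exists h, L2 h /\ iso g h) /\
  (forall h, L2 h -> exists g, L1 g /\ iso g h).

Definition context_free (L : graph -> Prop) : Prop :=
  exists (N : finType) (R : grammar N) (U : N), same_classes (least_sol R U) L.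

Fixpoint gen_term (tau : seq nat) (t : term void) : Prop :=
  match t with
  | TVar _ => False
  | TZero tau' => {subset tau' <= tau}
  | TEdge a ss => all (fun s => s \in tau) ss
  | TRestrict tau' t => {subset tau' <= tau} /\ gen_term tau t
  | TRename al t => (forall s, s \notin tau -> al s = s) /\ gen_term tau t
  | TPar t1 t2 => gen_term tau t1 /\ gen_term tau t2
  end.

Definition G_gen (tau : seq nat) (g : graph) : Prop :=
  exists t : term void, gen_term tau t /\ g = value t.

End HR.

From mathcomp Require Import all_boot.
From Stdlib Require List.
Set Implicit Arguments. Unset Strict Implicit. Unset Printing Implicit Defensive.

(* Although G^tau_gen terms may use infinitely many operations, only finitely
   many of them are distinct as functions on graphs: 0_tau' and restrict_tau'
   depend only on a duplicate-free listing of tau' (a word of length at most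
   |tau| over tau), a_(s_1,...) on a word of length #a over tau, and a
   renaming fixing every label outside tau on the permutation it induces on
   tau.  A grammar with a single nonterminal X and the rules X -> c for these
   finitely many constants c, X -> op X for these unary operations op, and
   X -> X || X therefore generates exactly G^tau_gen, even up to equality of
   concrete graphs. *)

Lemma InP (T : eqType) (x : T) (s : seq T) : reflect (List.In x s) (x \in s).
Proof.
apply: (iffP idP); elim: s => [|y s IH] //=; rewrite in_cons.
- by case/orP=> [/eqP->|/IH]; [left|right].
- by case=> [->|/IH ->]; rewrite ?eqxx ?orbT.
Qed.

Lemma iso_refl (A : finType) (g : graph A) : iso g g.
Proof.
have pair_idE (T U : Type) (h : U -> U) (l : seq (T * U)) :
    h =1 id -> [seq (p.1, h p.2) | p <- l] = l.
  by move=> hE; rewrite -[RHS]map_id; apply: eq_map => -[x y]; rewrite /= hE.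
exists id; rewrite map_id (pair_idE _ _ (map id) _ (@map_id _)).
by rewrite (pair_idE _ _ id (gsrc g) (frefl _)); do !split.
Qed.

Lemma same_classes_eq (A : finType) (L1 L2 : graph A -> Prop) :
  (forall g, L1 g <-> L2 g) -> same_classes L1 L2.
Proof. by move=> L12; split=> g /L12 Lg; exists g; split=> //; apply: iso_refl. Qed.

Fixpoint words (T : Type) (u : seq T) (k : nat) : seq (seq T) :=
  if k is k'.+1 then [seq x :: s | x <- u, s <- words u k'] else [:: [::]].

Lemma mem_words (T : eqType) (u s : seq T) k :
  (s \in words u k) = (size s == k) && all (mem u) s.
Proof.
elim: k s => [|k IH] [|x s] //=.
- by apply/negbTE/allpairsP; case=> [[y t]] /= [_ _].
- apply/allpairsP/and3P.
  + case=> [[y t]] /= [yu tk [-> ->]]; move: tk; rewrite IH => /andP[/eqP -> ->].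
    by rewrite eqxx yu.
  + by case=> [sk xu su]; exists (x, s); rewrite /= IH su -eqSS sk.
Qed.

Definition short_words (T : Type) (u : seq T) : seq (seq T) :=
  [seq s | k <- iota 0 (size u).+1, s <- words u k].

Lemma mem_short_words (T : eqType) (u s : seq T) :
  (s \in short_words u) = (size s <= size u) && all (mem u) s.
Proof.
apply/allpairsPdep/andP => [[k [t [+ + ->]]]|[su /allP su']].
- by rewrite mem_iota ltnS mem_words => kle /andP[/eqP-> ->].
- by exists (size s), s; rewrite mem_iota ltnS mem_words su eqxx; split=> //; exact/allP.
Qed.

(* The permutation sending the i-th entry of [u] to the i-th entry of [v],
   or the identity when [v] is not a rearrangement of the duplicate-free [u]. *)
Definition relabel (u v : seq nat) (n : nat) : nat :=
  if uniq u && perm_eq u v && (n \in u) then nth n v (index n u) else n.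

Lemma relabel_out u v n : n \notin u -> relabel u v n = n.
Proof. by rewrite /relabel => /negbTE->; rewrite andbF. Qed.

Lemma relabelK u v : cancel (relabel u v) (relabel v u).
Proof.
have uvE : (uniq v && perm_eq v u) = (uniq u && perm_eq u v).
  by rewrite perm_sym; have [/perm_uniq->|] := boolP (perm_eq u v); rewrite ?andbF.
move=> n; rewrite /relabel uvE.
have [/andP[uu uv]|] := boolP (uniq u && perm_eq u v) => //=.
have [nu|nu] := boolP (n \in u); last by rewrite -(perm_mem uv) (negbTE nu).
have lt : index n u < size v by rewrite -(perm_size uv) index_mem.
by rewrite mem_nth // index_uniq ?nth_index // -(perm_uniq uv).
Qed.

Lemma relabel_fin u v : exists n0, forall n, n0 <= n -> relabel u v n = n.
Proof.
exists (\max_(x <- u) x).+1 => n; rewrite /relabel; case: ifP => // /andP[_ nu].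
by rewrite ltnNge (leq_bigmax_seq n nu).
Qed.

Definition relabel_perm (u v : seq nat) : fperm :=
  FPerm (Bijective (relabelK u v) (relabelK v u)) (relabel_fin u v).

Lemma perm_map_fixing (T : eqType) (f : T -> T) (s : seq T) :
  injective f -> uniq s -> (forall x, x \notin s -> f x = x) -> perm_eq s (map f s).
Proof.
move=> f_inj s_uniq f_fix.
have sub : {subset map f s <= s}.
  move=> _ /mapP[x xs ->]; apply: contraT => fxs.
  by have /f_inj fxx := f_fix _ fxs; rewrite fxx xs in fxs.
have fs_uniq : uniq (map f s) by rewrite map_inj_uniq.
have [_ eq_fs] := uniq_min_size fs_uniq sub (eq_leq (esym (size_map f s))).
by rewrite perm_sym uniq_perm.
Qed.

Lemma relabel_map_fixing (f : nat -> nat) (s : seq nat) :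
  injective f -> uniq s -> (forall x, x \notin s -> f x = x) -> relabel s (map f s) =1 f.
Proof.
move=> f_inj s_uniq f_fix n; have [ns|ns] := boolP (n \in s); last first.
  by rewrite relabel_out ?f_fix.
rewrite /relabel s_uniq perm_map_fixing // ns.
by rewrite (nth_map n) ?index_mem ?nth_index.
Qed.

Section GenGrammar.
Variables (A : finType) (ar : A -> nat) (tau : seq nat).

Local Notation u := (undup tau).
Local Notation X := (TVar ar tt).

Definition tuple_of_word (a : A) (s : seq nat) : (ar a).-tuple nat :=
  insubd (nseq_tuple (ar a) 0) s.

Definition gen_rhs : list (term ar unit) :=
  (List.map (TZero ar unit) (short_words u) ++
   List.flat_map (fun a => List.map (fun s => TEdge unit (tuple_of_word a s)) (words u (ar a)))
     (enum A) ++
   List.map (fun s => TRestrict s X) (short_words u) ++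
   List.map (fun v => TRename (relabel_perm u v) X) (words u (size u)) ++
   [:: TPar X X])%list.

Definition gen_grammar : grammar ar unit := List.map (pair tt) gen_rhs.

Lemma gen_grammar_closedE (sigma : unit -> graph A -> Prop) :
  (forall r, List.In r gen_grammar -> forall g, eval_set sigma r.2 g -> sigma r.1 g) <->
  (forall t, List.In t gen_rhs -> forall g, eval_set sigma t g -> sigma tt g).
Proof.
split=> [closed t t_in | closed [[] t] /List.in_map_iff [t' [[<-] t'_in]]].
  exact: (closed (tt, t) (List.in_map _ _ _ t_in)).
exact: closed.
Qed.

Lemma all_mem_undupP s : reflect {subset s <= tau} (all (mem u) s).
Proof. by apply: (iffP allP) => s_sub x /s_sub; rewrite /= mem_undup. Qed.

Lemma short_word_sort s : s \in short_words u -> {subset s <= tau}.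
Proof. by rewrite mem_short_words => /andP[_ /all_mem_undupP]. Qed.

Lemma sort_short_word s : {subset s <= tau} -> undup s \in short_words u.
Proof.
move=> s_tau; have s_u : {subset undup s <= u} by move=> x; rewrite !mem_undup; apply: s_tau.
by rewrite mem_short_words (uniq_leq_size (undup_uniq s) s_u); apply/allP.
Qed.

Lemma G_gen_closed t :
  List.In t gen_rhs -> forall g, eval_set (fun=> G_gen ar tau) t g -> G_gen ar tau g.
Proof.
rewrite !List.in_app_iff => -[|[|[|[|[]]]]] //.
- case/List.in_map_iff=> s [<- /InP /short_word_sort s_tau] _ ->.
  by exists (TZero ar void s).
- case/List.in_flat_map=> a [_ /List.in_map_iff [s [<-]]].
  move/InP; rewrite mem_words => /andP[/eqP s_size /all_mem_undupP s_tau] _ ->.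
  exists (TEdge void (tuple_of_word a s)); split=> //=.
  by rewrite insubdK -?topredE /= ?s_size //; apply/allP.
- case/List.in_map_iff=> s [<- /InP /short_word_sort s_tau] _ [_ [[t' [t'_gen ->]] ->]].
  by exists (TRestrict s t').
- case/List.in_map_iff=> v [<- _] _ [_ [[t' [t'_gen ->]] ->]].
  exists (TRename (relabel_perm u v) t'); split=> //; split=> // x x_tau.
  by apply: relabel_out; rewrite mem_undup.
- move=> <- _ [_ [_ [[t1 [t1_gen ->]] [[t2 [t2_gen ->]] ->]]]].
  by exists (TPar t1 t2).
Qed.

Lemma least_sol_G_gen g : least_sol gen_grammar tt g -> G_gen ar tau g.
Proof. by move/(_ (fun=> G_gen ar tau)); apply; apply/gen_grammar_closedE; apply: G_gen_closed. Qed.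

Lemma G_gen_least_sol g : G_gen ar tau g -> least_sol gen_grammar tt g.
Proof.
case=> t [t_gen ->] sigma /gen_grammar_closedE closed.
elim: t t_gen => [[] | tau' tau'_tau | a ss /allP ss_tau
  | tau' t IH [tau'_tau t_gen] | al t IH [al_fix t_gen] | t1 IH1 t2 IH2 [t1_gen t2_gen]] /=.
- have -> : hr_zero A tau' = hr_zero A (undup tau').
    by rewrite /hr_zero (undup_id (undup_uniq tau')).
  apply: (closed (TZero ar unit (undup tau'))) => //.
  by rewrite !List.in_app_iff; left; apply/List.in_map/InP/sort_short_word.
- have -> : hr_edge a ss = hr_edge a (tuple_of_word a ss) by rewrite /tuple_of_word valKd.
  apply: (closed (TEdge unit (tuple_of_word a ss))) => //.
  rewrite !List.in_app_iff; right; left; apply/List.in_flat_map; exists a.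
  split; first by apply/InP; rewrite mem_enum.
  by apply/List.in_map/InP; rewrite mem_words size_tuple eqxx; apply/all_mem_undupP.
- apply: (closed (TRestrict (undup tau') X)).
    by rewrite !List.in_app_iff; do 2 right; left; apply/List.in_map/InP/sort_short_word.
  exists (value t); split; first exact: IH.
  by congr Graph; apply: eq_filter => p; rewrite mem_undup.
- have al_fix_u x : x \notin u -> al x = x by rewrite mem_undup; apply: al_fix.
  have al_inj : injective al := bij_inj (fperm_bij al).
  have u_perm := perm_map_fixing al_inj (undup_uniq tau) al_fix_u.
  apply: (closed (TRename (relabel_perm u (map al u)) X)).
    rewrite !List.in_app_iff; do 3 right; left; apply/List.in_map/InP.
    by rewrite mem_words size_map eqxx; apply/allP => x; rewrite /= (perm_mem u_perm).
  exists (value t); split; first exact: IH.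
  congr Graph; apply: eq_map => p /=.
  by rewrite (relabel_map_fixing al_inj (undup_uniq tau) al_fix_u).
- apply: (closed (TPar X X)); first by rewrite !List.in_app_iff; do 4 right; left.
  by exists (value t1), (value t2); split; [exact: IH1 | split; [exact: IH2 |]].
Qed.

End GenGrammar.

Theorem proposition5p1 (A : finType) (ar : A -> nat)
  (har : forall a : A, 0 < ar a) (tau : seq nat) :
  context_free ar (G_gen ar tau).
Proof.
exists unit, (gen_grammar ar tau), tt.
by apply: same_classes_eq => g; split; [apply: least_sol_G_gen | apply: G_gen_least_sol].
Qed.
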